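(* Let $t$ be an $\mathrm{SL}_2$-tiling and $i<j$ integers. Then $c_{ij}$ and $d_{ij}$ are positive integers.
   Context: An $\mathrm{SL}_2$-tiling is a map $t:\mathbb{Z}\times\mathbb{Z}\to\{1,2,3,\dots\}$, $(i,j)\mapsto t_{ij}$, with $t_{ij}t_{i+1,j+1}-t_{i,j+1}t_{i+1,j}=1$ for all $i,j$. For integers $i<j$ and any integer $a$ put $c_{ij}=t_{ia}t_{j,a+1}-t_{i,a+1}t_{ja}$ and $d_{ij}=t_{ai}t_{a+1,j}-t_{aj}t_{a+1,i}$; these values do not depend on the choice of $a$ (a known fact about $\mathrm{SL}_2$-tilings). *)

From Stdlib Require Import ZArith.
Open Scope Z_scope.

Definition is_SL2_tiling (t : Z -> Z -> Z) : Prop :=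
  (forall i j, 1 <= t i j) /\
  (forall i j, t i j * t (i+1) (j+1) - t i (j+1) * t (i+1) j = 1).

(* c_{ij} computed with the auxiliary column a *)
Definition c_at (t : Z -> Z -> Z) (i j a : Z) : Z :=
  t i a * t j (a+1) - t i (a+1) * t j a.

(* d_{ij} computed with the auxiliary row a *)
Definition d_at (t : Z -> Z -> Z) (i j a : Z) : Z :=
  t a i * t (a+1) j - t a j * t (a+1) i.

From Stdlib Require Import ZArith Lia.
Open Scope Z_scope.

(* Fix two adjacent columns a, a+1 of the tiling and view them as
   a sequence of integer vectors v_k = (t k a, t k (a+1)).  Then c_{ij} is the
   2x2 determinant [v_i, v_j], and the SL_2 condition says [v_k, v_{k+1}] = 1.
   Since the first coordinates are positive, "[v_i, v_j] > 0" means that the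
   slope of v_j exceeds the slope of v_i; positivity of consecutive
   determinants thus propagates to all pairs i < j by the three-term
   (Plücker) identity  x_j [v_i, v_{j+1}] = [v_i, v_j] x_{j+1} + [v_j, v_{j+1}] x_i. *)

Definition cross (x y : Z -> Z) (i j : Z) : Z := x i * y j - y i * x j.

Lemma cross_plucker (x y : Z -> Z) (i j l : Z) :
  x j * cross x y i l = cross x y i j * x l + cross x y j l * x i.
Proof. unfold cross; ring. Qed.

Section SlopeMonotonicity.

Variables x y : Z -> Z.
Hypothesis x_pos : forall k, 0 < x k.
Hypothesis cross_succ_pos : forall k, 0 < cross x y k (k + 1).

Lemma cross_pos (i j : Z) : i < j -> 0 < cross x y i j.
Proof.
  intros Hij.
  pattern j; apply Z.le_ind with (n := i + 1).
  - intros ? ? ->; reflexivity.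
  - apply cross_succ_pos.
  - intros l Hl IH; rewrite <- Z.add_1_r.
    (* x_l [v_i, v_{l+1}] = [v_i, v_l] x_{l+1} + [v_l, v_{l+1}] x_i > 0. *)
    pose proof (cross_plucker x y i l (l + 1)) as Hid.
    pose proof (cross_succ_pos l); pose proof (x_pos i);
      pose proof (x_pos l); pose proof (x_pos (l + 1)).
    nia.
  - lia.
Qed.

End SlopeMonotonicity.

Lemma c_at_cross (t : Z -> Z -> Z) (i j a : Z) :
  c_at t i j a = cross (fun k => t k a) (fun k => t k (a + 1)) i j.
Proof. reflexivity. Qed.

Lemma d_at_cross (t : Z -> Z -> Z) (i j a : Z) :
  d_at t i j a = cross (fun k => t a k) (fun k => t (a + 1) k) i j.
Proof. unfold d_at, cross; ring. Qed.

Theorem proposition5p6 (t : Z -> Z -> Z) (i j : Z) :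
  is_SL2_tiling t -> i < j ->
  forall a : Z, 0 < c_at t i j a /\ 0 < d_at t i j a.
Proof.
  intros [Hpos Hdet] Hij a; split.
  -
    rewrite c_at_cross; apply cross_pos; [| | exact Hij].
    + intros k; pose proof (Hpos k a); lia.
    + intros k; unfold cross; pose proof (Hdet k a); lia.
  -
    rewrite d_at_cross; apply cross_pos; [| | exact Hij].
    + intros k; pose proof (Hpos a k); lia.
    + intros k; unfold cross; pose proof (Hdet a k); lia.
Qed.
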